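(* Let $p$ be prime, $G=\mathbb{Z}_{p^2}\times\mathbb{Z}_p$, and $A\subset G$ with $\#A=p$ and $\mathcal{Z}_A\neq\emptyset$. Then $A$ is a tile of $G$ and also a spectral set.
   Context: For $b=(b_1,b_2)\in G$ let $\chi_b(a_1,a_2)=e^{2\pi i(a_1b_1/p^2+a_2b_2/p)}$, $\widehat{1}_A(b)=\sum_{a\in A}\overline{\chi_b(a)}$, and $\mathcal{Z}_A=\{b\in G:\widehat{1}_A(b)=0\}$. $A$ is a spectral set if there is $B\subset G$ with $\{\chi_b|_A:b\in B\}$ an orthogonal basis of $L^2(A)$ (counting measure). $A$ is a tile if there is $T\subset G$ with $A\oplus T=G$ (every element of $G$ uniquely $a+t$, $a\in A,t\in T$). *)

From HB Require Import structures.
From mathcomp Require Import all_boot all_order all_algebra all_field.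
Set Implicit Arguments. Unset Strict Implicit. Unset Printing Implicit Defensive.
Import Order.TTheory GRing.Theory Num.Theory.
Local Open Scope ring_scope.

(* The group G = Z_{p^2} x Z_p (p prime, so p^2 >= 4 and p >= 2, and the
   'Z_ notations denote the intended cyclic groups). *)
Definition G (p : nat) : finType := ('Z_(p ^ 2) * 'Z_p)%type.

Definition addG (p : nat) (x y : G p) : G p := (x.1 + y.1, x.2 + y.2)%R.

(* zeta p = e^{2 pi i / p^2}:  n.-root (-1) is the n-th root of -1 with
   minimal nonnegative argument, i.e. e^{i pi / n}; its square is e^{2 pi i/n}. *)
Definition zeta (p : nat) : algC := ((p ^ 2)%N.-root (-1)) ^+ 2.

(* chi_b(a) = e^{2 pi i (a1 b1 / p^2 + a2 b2 / p)} = zeta^(a1 b1 + p a2 b2). *)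
Definition chi (p : nat) (b a : G p) : algC :=
  zeta p ^+ (val a.1 * val b.1 + p * (val a.2 * val b.2))%N.

Definition hat1 (p : nat) (A : {set G p}) (b : G p) : algC :=
  \sum_(a in A) (chi b a)^*.

Definition ZA (p : nat) (A : {set G p}) : {set G p} :=
  [set b | hat1 A b == 0].

Definition is_tile (p : nat) (A : {set G p}) : Prop :=
  exists T : {set G p}, forall g : G p,
    exists! u : G p * G p, [/\ u.1 \in A, u.2 \in T & addG u.1 u.2 = g].

Definition ipA (p : nat) (A : {set G p}) (f h : G p -> algC) : algC :=
  \sum_(a in A) f a * (h a)^*.

(* A is spectral: there is B such that {chi_b|_A : b in B} is an orthogonal
   basis of L^2(A): the family is pairwise orthogonal (distinct indices) and
   has #A = dim L^2(A) members (orthogonal nonzero vectors are independent,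
   each chi_b|_A has norm #A <> 0). *)
Definition is_spectral (p : nat) (A : {set G p}) : Prop :=
  exists B : {set G p}, #|B| = #|A| /\
    forall b b', b \in B -> b' \in B -> b != b' -> ipA A (chi b) (chi b') = 0.

From HB Require Import structures.
From mathcomp Require Import all_boot all_order all_algebra all_field.
From mathcomp Require Import ring.
Set Implicit Arguments. Unset Strict Implicit. Unset Printing Implicit Defensive.
Import Order.TTheory GRing.Theory Num.Theory.

(* Pick b in Z_A and write chi_b(a) = zeta^(E a) with E a = a1 b1 + p a2 b2, so
   that sum_(a in A) zeta^(E a) = 0.  Galois conjugation makes every
   sum_(a in A) zeta^(m E a) with m prime to p vanish as well.  The order of zeta
   divides p^2 and is not 1 (the sum would be #A), so it is n = p s with s | p.
   Fourier inversion on Z/n shows that #{a in A | E a = k mod n} is s-periodic in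
   k; since #A = p, a |-> E a mod n is then a bijection from A onto a coset of
   sZ/nZ, and A tiles G with the preimage of {0, ..., s-1} under E mod n.  The
   characters chi_(kb), 0 <= k < p, are pairwise orthogonal on A, because the
   exponent k - k' of their ratio is again prime to p. *)

Definition residue_count (I : finType) (A : {set I}) (E : I -> nat) n k :=
  #|[set a in A | E a == k %[mod n]]|.

Lemma residue_coset_of_periodic (I : finType) (A : {set I}) (E : I -> nat) p s :
  0 < p -> 0 < s -> #|A| = p ->
  (forall k, residue_count A E (p * s) k = residue_count A E (p * s) (k + s)) ->
  exists r, [/\ {in A &, forall a a', E a = E a' %[mod p * s] -> a = a'},
                {in A, forall a, E a = r %[mod s]}
              & forall j, exists2 a, a \in A & E a = r + j * s %[mod p * s]].
Proof.
move=> p_gt0 s_gt0 cardA periodic; set n := p * s.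
have n_gt0 : 0 < n by rewrite muln_gt0 p_gt0.
have [a0 a0A] : exists a0, a0 \in A by apply/set0Pn; rewrite -card_gt0 cardA.
exists (E a0).
have hit j : exists2 a, a \in A & E a = E a0 + j * s %[mod n].
  have : 0 < residue_count A E n (E a0 + j * s).
    elim: j => [|j IHj]; last by rewrite mulSnr addnA -periodic.
    by rewrite card_gt0; apply/set0Pn; exists a0; rewrite inE a0A mul0n addn0 eqxx.
  by rewrite card_gt0 => /set0Pn[a]; rewrite inE => /andP[aA /eqP]; exists a.
pose res (a : I) : 'I_n := Ordinal (ltn_pmod (E a) n_gt0).
pose coset := [set Ordinal (ltn_pmod (E a0 + val j * s) n_gt0) | j : 'I_p].
have card_coset : #|coset| = p.
  rewrite card_imset ?card_ord // => j j' /(congr1 val) /= /eqP.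
  rewrite eqn_modDl -!muln_modl // !modn_small // eqn_pmul2r // => /eqP.
  exact: val_inj.
have coset_sub : coset \subset res @: A.
  apply/subsetP => _ /imsetP[j _ ->]; have [a aA Ea] := hit j.
  by apply/imsetP; exists a => //; apply: val_inj.
have card_res : #|res @: A| = p.
  apply/eqP; rewrite eqn_leq -{1}cardA leq_imset_card -{1}card_coset.
  exact: subset_leq_card.
have res_inj : {in A &, injective res} by apply/imset_injP; rewrite card_res cardA.
have res_coset : res @: A = coset.
  by apply/esym/eqP; rewrite eqEcard coset_sub card_res card_coset leqnn.
split=> // [a a' aA a'A Eaa'|a aA]; first by apply: res_inj => //; apply: val_inj.
have : res a \in coset by rewrite -res_coset imset_f.
case/imsetP=> j _ /(congr1 val) /= Ea.
have s_dvd_n : s %| n by rewrite dvdn_mull.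
by rewrite -(modn_dvdm _ s_dvd_n) Ea modn_dvdm // addnC modnMDl.
Qed.

Lemma residue_coset_tile (V : finZmodType) (A : {set V}) (E : V -> nat) p s r :
  0 < p -> 0 < s ->
  (forall x y, E (x + y)%R = E x + E y %[mod p * s]) ->
  {in A &, forall a a', E a = E a' %[mod p * s] -> a = a'} ->
  {in A, forall a, E a = r %[mod s]} ->
  (forall j, exists2 a, a \in A & E a = r + j * s %[mod p * s]) ->
  exists T : {set V}, forall g,
    exists! u : V * V, [/\ u.1 \in A, u.2 \in T & (u.1 + u.2)%R = g].
Proof.
move=> p_gt0 s_gt0; set n := p * s => ED E_inj E_r hit.
have n_gt0 : 0 < n by rewrite muln_gt0 p_gt0.
have s_dvd_n : s %| n by rewrite dvdn_mull.
have mod_small_s x : x %% n < s -> x %% n = x %% s.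
  by move=> xs; rewrite -(modn_dvdm _ s_dvd_n) (modn_small xs).
exists [set t | E t %% n < s] => g.
(* D = E g - r (mod n), avoiding truncated subtraction. *)
pose D := E g + n.-1 * r.
have [a aA Ea] := hit (D %/ s).
have ED_sub : E g = E a + E (g - a)%R %[mod n] by rewrite -ED subrKC.
have Eg : E g = r + D %/ s * s + D %% s %[mod n].
  rewrite -addnA -divn_eq /D addnCA -mulSn prednK //.
  by rewrite [in RHS]addnC mulnC modnMDl.
have Et : E (g - a)%R %% n = D %% s.
  have /eqP : r + D %/ s * s + E (g - a)%R = r + D %/ s * s + D %% s %[mod n].
    by rewrite -Eg ED_sub -modnDml -Ea modnDml.
  rewrite eqn_modDl => /eqP ->; rewrite modn_small //.
  exact: leq_trans (ltn_pmod _ s_gt0) (dvdn_leq n_gt0 s_dvd_n).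
exists (a, g - a)%R; split=> [|[a' t] [/= a'A]].
  by split; rewrite ?inE ?Et ?ltn_pmod ?subrKC.
rewrite inE => t_small gE.
have sumE : E a' + E t = E a + E (g - a)%R %[mod n] by rewrite -!ED gE subrKC.
have Ett : E t %% n = E (g - a)%R %% n.
  rewrite (mod_small_s _ t_small) mod_small_s ?Et ?ltn_pmod //.
  move/(congr1 (modn^~ s)): sumE; rewrite !modn_dvdm //.
  rewrite -modnDml E_r // modnDml -[in RHS]modnDml E_r // modnDml.
  by move/eqP; rewrite eqn_modDl => /eqP.
have a'a : a' = a.
  apply: E_inj => //; apply/eqP; rewrite -(eqn_modDr (E t)); apply/eqP.
  by rewrite sumE -modnDmr -Ett modnDmr.
by rewrite -gE a'a [(a + t)%R]addrC addrK.
Qed.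

Local Open Scope ring_scope.

Lemma geom_sum_unity_root_eq0 (R : idomainType) (w : R) n :
  w ^+ n = 1 -> w != 1 -> \sum_(i < n) w ^+ i = 0.
Proof.
move=> wn1 w_neq1; apply/eqP; have /esym/eqP := subrX1 w n.
by rewrite wn1 subrr mulf_eq0 subr_eq0 (negbTE w_neq1).
Qed.

Lemma unity_root_mul_conjC (z : algC) n : (0 < n)%N -> z ^+ n = 1 -> z * z^* = 1.
Proof.
move=> n_gt0 zn1; rewrite -normCK.
have /eqP : `|z| ^+ n = 1 by rewrite -normrX zn1 normr1.
by rewrite pexpr_eq1 ?normr_ge0 -?lt0n // => /eqP ->; rewrite expr1n.
Qed.

Lemma prim_root_pfactor (R : nzRingType) (z : R) p k :
  prime p -> z ^+ (p ^ k) = 1 -> exists2 i, (i <= k)%N & (p ^ i).-primitive_root z.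
Proof.
move=> p_pr zpk1; have pk_gt0 : (0 < p ^ k)%N by rewrite expn_gt0 prime_gt0.
have [n prim_z n_dvd] := prim_order_exists pk_gt0 zpk1.
have [i le_ik n_eq] := dvdn_pfactor n k p_pr n_dvd.
by exists i; rewrite -?n_eq.
Qed.

Lemma sum_prim_root_expr_coprime (z : algC) n m (I : finType) (A : {set I})
    (E : I -> nat) :
  n.-primitive_root z -> coprime m n ->
  \sum_(a in A) z ^+ E a = 0 -> \sum_(a in A) z ^+ (m * E a) = 0.
Proof.
move=> prim_z co_mn sum0; have [u uE] := Qn_aut_exists co_mn.
have zEn a : (z ^+ E a) ^+ n = 1.
  by rewrite exprAC (prim_expr_order prim_z) expr1n.
transitivity (u (\sum_(a in A) z ^+ E a)); last by rewrite sum0 rmorph0.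
rewrite rmorph_sum; apply: eq_bigr => a _.
by rewrite uE // -exprM mulnC.
Qed.

Lemma residue_count_shift (R : numFieldType) (z : R) n s (I : finType)
    (A : {set I}) (E : I -> nat) :
  n.-primitive_root z ->
  (forall m, ~~ (n %| m * s)%N -> \sum_(a in A) z ^+ (m * E a) = 0) ->
  forall k, residue_count A E n k = residue_count A E n (k + s).
Proof.
move=> prim_z sum0.
have n_gt0 : (0 < n)%N by apply: prim_order_gt0 prim_z.
have z_neq0 : z != 0 by rewrite (prim_root_eq0 prim_z) -lt0n.
(* F k = n * residue_count A E n k by orthogonality of the characters of Z/n;
   F is s-periodic since its inner sums vanish unless n %| m * s, in which case
   they are blind to a shift of k by s. *)
pose F k := \sum_(m < n) \sum_(a in A) (z ^+ E a / z ^+ k) ^+ m.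
have FE k : F k = (residue_count A E n k * n)%:R.
  rewrite /F exchange_big /= (bigID (fun a => E a == k %[mod n])) /=.
  rewrite [X in _ + X]big1 => [|a /andP[_ /negPf Ek]]; last first.
    apply: geom_sum_unity_root_eq0.
      by rewrite expr_div_n exprAC [X in _ / X]exprAC (prim_expr_order prim_z) !expr1n divr1.
    by apply: contraFneq Ek => /divr1_eq /eqP; rewrite (eq_prim_root_expr prim_z).
  rewrite addr0 (eq_bigr (fun=> n%:R)) => [|a /andP[_ Ek]].
    by rewrite sumr_const -mulrnA mulnC /residue_count cardsE.
  have -> : z ^+ E a = z ^+ k by apply/eqP; rewrite (eq_prim_root_expr prim_z).
  rewrite divff ?expf_neq0 //; under eq_bigr do rewrite expr1n.
  by rewrite sumr_const card_ord.
have F_shift k : F k = F (k + s).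
  have inner j m : \sum_(a in A) (z ^+ E a / z ^+ j) ^+ m
                   = (\sum_(a in A) z ^+ (m * E a)) / (z ^+ j) ^+ m.
    by rewrite mulr_suml; apply: eq_bigr => a _; rewrite expr_div_n -!exprM (mulnC (E a)).
  apply: eq_bigr => m _; rewrite !inner.
  have [/dvdnP[q msE]|/sum0 ->] := boolP (n %| m * s)%N; last by rewrite !mul0r.
  rewrite exprD exprMn -(exprM z s m) (mulnC s m) msE (mulnC q n) exprM.
  by rewrite (prim_expr_order prim_z) expr1n mulr1.
by move=> k; apply/eqP; rewrite -(eqn_pmul2r n_gt0) -(eqr_nat R) -!FE F_shift.
Qed.

Lemma val_ZpD m (x y : 'Z_m) : (1 < m)%N -> val (x + y) = ((val x + val y) %% m)%N.
Proof. by move=> m_gt1 /=; congr (_ %% _)%N; apply: Zp_cast. Qed.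

Lemma val_ZpMn m (x : 'Z_m) k : (1 < m)%N -> val (x *+ k) = ((val x * k) %% m)%N.
Proof. by move=> m_gt1; rewrite Zp_mulrn /=; congr (_ %% _)%N; apply: Zp_cast. Qed.

HB.instance Definition _ (U W : finZmodType) := GRing.Zmodule.on (U * W)%type.

(* The carrier of [G p] as a Z-module; [addG] is convertible to its addition. *)
Local Notation Gz p := ('Z_(p ^ 2) * 'Z_p)%type.

Definition chi_exp p (b a : G p) : nat := (val a.1 * val b.1 + p * (val a.2 * val b.2))%N.

Lemma zeta_expr_p2 p : zeta p ^+ (p ^ 2) = 1.
Proof.
have [->|p_gt0] := posnP p; first by rewrite exp0n // expr0.
by rewrite /zeta exprAC rootCK ?expn_gt0 ?p_gt0 // sqrrN expr1n.
Qed.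

Lemma zeta_expr_mod p i : zeta p ^+ (i %% p ^ 2) = zeta p ^+ i.
Proof. exact: expr_mod (zeta_expr_p2 p). Qed.

Section CharacterExponent.
Variable p : nat.
Hypothesis p_gt1 : (1 < p)%N.

Let p2_gt1 : (1 < p ^ 2)%N. Proof. by rewrite (ltn_exp2l 0). Qed.

Let mul_modp u : (p * (u %% p) = (p * u) %% p ^ 2)%N.
Proof. by rewrite -mulnn muln_modr. Qed.

Lemma chi_expD (b x y : Gz p) :
  (chi_exp b (x + y)%R = chi_exp b x + chi_exp b y %[mod p ^ 2])%N.
Proof.
rewrite /chi_exp !val_ZpD // [(p * (_ * _))%N]mulnA mul_modp.
rewrite -modnDml modnMml modnDml -modnDmr modnMml modnDmr.
by congr (_ %% _)%N; ring.
Qed.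

Lemma chi_expMn (b a : Gz p) k :
  (chi_exp (b *+ k)%R a = k * chi_exp b a %[mod p ^ 2])%N.
Proof.
rewrite /chi_exp pairMnE /= !val_ZpMn // [(p * (_ * _))%N]mulnCA mul_modp mulnCA.
rewrite -modnDml modnMmr modnDml -modnDmr modnMmr modnDmr.
by congr (_ %% _)%N; ring.
Qed.

Lemma chiMn (b a : Gz p) k : chi (b *+ k) a = zeta p ^+ (k * chi_exp b a).
Proof.
transitivity (zeta p ^+ chi_exp (b *+ k) a) => //.
by rewrite -zeta_expr_mod chi_expMn zeta_expr_mod.
Qed.

End CharacterExponent.

Section SpectralTile.
Variable p : nat.
Hypothesis p_prime : prime p.

Let p_gt0 : (0 < p)%N. Proof. exact: prime_gt0. Qed.
Let p_gt1 : (1 < p)%N. Proof. exact: prime_gt1. Qed.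

Lemma spectral_of_sum_coprime_eq0 (A : {set G p}) (b : Gz p) :
  #|A| = p ->
  (forall m, coprime m p -> \sum_(a in A) zeta p ^+ (m * chi_exp b a) = 0) ->
  is_spectral A.
Proof.
move=> cardA sum0.
have zeta_conj e : zeta p ^+ e * (zeta p ^+ e)^* = 1.
  apply: (@unity_root_mul_conjC _ (p ^ 2)); first by rewrite expn_gt0 p_gt0.
  by rewrite exprAC zeta_expr_p2 expr1n.
have ip_sub k k' : (k' <= k)%N ->
    ipA A (chi (b *+ k)) (chi (b *+ k')) = \sum_(a in A) zeta p ^+ ((k - k') * chi_exp b a).
  move=> le_k'k; apply: eq_bigr => a _; rewrite !(chiMn p_gt1).
  by rewrite -{1}(subnK le_k'k) mulnDl exprD -mulrA (zeta_conj (k' * _)) mulr1.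
have ip_conj f h : ipA A f h = (ipA A h f)^*.
  by rewrite /ipA rmorph_sum; apply: eq_bigr => a _; rewrite rmorphM /= conjCK mulrC.
have orth k k' : (k < p)%N -> (k' < p)%N -> k != k' ->
    ipA A (chi (b *+ k)) (chi (b *+ k')) = 0.
  wlog lt_k'k : k k' / (k' < k)%N.
    move=> gen kp k'p; rewrite neq_ltn => /orP[lt_kk' | lt_k'k].
      by rewrite ip_conj gen ?conjC0 // gtn_eqF.
    by rewrite gen // gtn_eqF.
  move=> kp _ _; rewrite ip_sub ?(ltnW lt_k'k) // sum0 // coprime_sym prime_coprime //.
  by rewrite gtnNdvd ?subn_gt0 // (leq_ltn_trans (leq_subr _ _) kp).
have ip_self k : ipA A (chi (b *+ k)) (chi (b *+ k)) = p%:R.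
  rewrite ip_sub // subnn (eq_bigr (fun=> 1)) => [|a _]; last by rewrite mul0n expr0.
  by rewrite sumr_const cardA.
exists [set b *+ val k | k : 'I_p]; split.
  rewrite card_imset ?card_ord // => k k' bkk'; apply/val_inj/eqP; apply: contraT => neq.
  have := orth _ _ (ltn_ord k) (ltn_ord k') neq; rewrite bkk' ip_self => /eqP.
  by rewrite pnatr_eq0 gtn_eqF.
move=> _ _ /imsetP[k _ ->] /imsetP[k' _ ->] neq; apply: orth; rewrite ?ltn_ord //.
by apply: contraNneq neq => ->.
Qed.

Lemma tile_of_prim_root i (A : {set G p}) (b : G p) :
  #|A| = p -> (i < 2)%N -> (p ^ i.+1).-primitive_root (zeta p) ->
  (forall m, coprime m p -> \sum_(a in A) zeta p ^+ (m * chi_exp b a) = 0) ->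
  is_tile A.
Proof.
move=> cardA lt_i2 prim_z sum0.
have n_dvd : (p * p ^ i %| p ^ 2)%N by rewrite -expnS dvdn_exp2l.
rewrite expnS in prim_z.
have s_gt0 : (0 < p ^ i)%N by rewrite expn_gt0 p_gt0.
have [|r [E_inj E_r hit]] := residue_coset_of_periodic p_gt0 s_gt0 cardA
  (residue_count_shift (A := A) (E := chi_exp b) prim_z _).
  move=> m ps_ndvd; apply: sum0; rewrite coprime_sym prime_coprime //.
  by move: ps_ndvd; apply: contra => p_dvd_m; rewrite dvdn_mul.
apply: (residue_coset_tile (V := Gz p) p_gt0 s_gt0 _ E_inj E_r hit) => x y.
by rewrite -(modn_dvdm _ n_dvd) chi_expD // modn_dvdm.
Qed.

End SpectralTile.

Theorem proposition5p3 (p : nat) (A : {set G p}) :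
  prime p -> #|A| = p -> ZA A != set0 -> is_tile A /\ is_spectral A.
Proof.
move=> p_prime cardA /set0Pn[b]; rewrite inE => /eqP hat1_eq0.
have sum1 : \sum_(a in A) zeta p ^+ chi_exp b a = 0.
  by apply: (can_inj conjCK); rewrite conjC0 rmorph_sum -[RHS]hat1_eq0.
have [i le_i2 prim_z] := prim_root_pfactor p_prime (zeta_expr_p2 p).
have sum_m m : coprime m p -> \sum_(a in A) zeta p ^+ (m * chi_exp b a) = 0.
  by move=> co_mp; apply: sum_prim_root_expr_coprime prim_z _ sum1; rewrite coprimeXr.
split; last exact: (spectral_of_sum_coprime_eq0 p_prime cardA sum_m).
case: i le_i2 prim_z => [_ prim_z | i lt_i2 prim_z]; last first.
  exact: (tile_of_prim_root p_prime cardA lt_i2 prim_z sum_m).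
have zeta1 : zeta p = 1 by rewrite -(prim_expr_order prim_z) expn0 expr1.
move: sum1; under eq_bigr do rewrite zeta1 expr1n.
by rewrite sumr_const cardA => /eqP; rewrite pnatr_eq0 gtn_eqF ?prime_gt0.
Qed.
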